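(* Let $k, s\in \mathbb{N}$ and let $T$ be a $ks$-linked tournament. Let $(x_1,y_1), \dots, (x_k,y_k)$ be ordered pairs of (not necessarily distinct) vertices of $T$. Then there exist distinct internally vertex-disjoint paths $P_1, \dots, P_k$ such that for all $i\in \{1,\dots, k\}$, $P_i$ is a directed path from $x_i$ to $y_i$ with $\{x_1,\dots, x_k, y_1, \dots, y_k\}\cap V(P_i)=\{x_i, y_i\}$, and such that $|\mathrm{Int}(P_1)\cup \dots \cup \mathrm{Int}(P_k)|\leq |V(T)|/s$.
   Context: A tournament is an orientation of a complete graph. A tournament $T$ is $k$-linked if $|V(T)|\geq 2k$ and whenever $x_1,\dots, x_k, y_1, \dots, y_k$ are $2k$ distinct vertices of $T$ there exist vertex-disjoint directed paths $P_1,\dots, P_k$ such that $P_i$ is a directed path from $x_i$ to $y_i$ for each $i$. For a directed path $P=x_1\dots x_\ell$, $\mathrm{Int}(P)=\{x_1,\dots,x_\ell\}\setminus\{x_1,x_\ell\}$ is its set of interior vertices. *)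

From mathcomp Require Import all_boot.
Set Implicit Arguments. Unset Strict Implicit. Unset Printing Implicit Defensive.

Definition tournament (V : finType) (T : rel V) : Prop :=
  (forall v, ~~ T v v) /\ (forall u v, u != v -> T u v != T v u).

Definition dipath (V : finType) (T : rel V) (x y : V) (P : seq V) : bool :=
  match P with
  | [::] => false
  | a :: p => [&& a == x, path T a p, last a p == y & uniq P]
  end.

Definition interior (V : finType) (P : seq V) : {set V} :=
  match P with
  | [::] => set0
  | a :: p => [set v in behead (belast a p)]
  end.

Definition linked (V : finType) (T : rel V) (k : nat) : Prop :=
  2 * k <= #|V| /\
  forall x y : 'I_k -> V,
    injective x -> injective y -> (forall i j, x i != y j) ->
    exists P : 'I_k -> seq V,
      (forall i, dipath T (x i) (y i) (P i)) /\
      (forall i j, i != j -> [disjoint P i & P j]).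

From mathcomp Require Import all_boot zify.
Set Implicit Arguments. Unset Strict Implicit. Unset Printing Implicit Defensive.

(* Split the k * s linkage slots into s groups of k, slot (c, i) serving the
   pair (x i, y i).  Pin every terminal vertex to one end of a slot of the first
   group, and give every other slot end a fresh out-neighbour of x i (start) or
   in-neighbour of y i (end); these are chosen greedily, since linkedness yields
   such neighbours outside any 2ks - 1 vertices.  Linking the 2ks distinct
   endpoints by disjoint paths, a terminal can only lie on the path it ends, so
   prepending x i and appending y i gives paths meeting the terminals exactly
   in their ends.  Distinct groups have disjoint interiors, hence one group
   uses at most |V| / s interior vertices. *)

Section Dipath.
Variables (V : finType) (T : rel V).

Lemma dipath_head x y P : dipath T x y P -> x \in P.
Proof. by case: P => // a p /and4P[/eqP-> _ _ _]; rewrite mem_head. Qed.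

Lemma dipath_last x y P : dipath T x y P -> y \in P.
Proof. by case: P => // a p /and4P[_ _ /eqP<- _]; apply: mem_last. Qed.

Lemma dipath_start_unique x x' y y' P : dipath T x y P -> dipath T x' y' P -> x = x'.
Proof. by case: P => // a p /and4P[/eqP<- _ _ _] /and4P[/eqP<- _ _ _]. Qed.

Lemma dipath_rev x y P : dipath T x y P -> dipath [rel u v | T v u] y x (rev P).
Proof.
case: P => // a p /and4P[/eqP-> Tp /eqP<- uP].
case/lastP: p Tp uP => [|q z] Tp; first by rewrite /= !eqxx.
rewrite -rev_uniq rev_cons rev_rcons /= !last_rcons !eqxx => /andP[-> ->]; rewrite !andbT.
have := rev_path [rel u v | T v u] x (rcons q z).
by rewrite last_rcons belast_rcons rev_cons => ->.
Qed.

Lemma mem_interior x y P v : dipath T x y P -> v \in interior P ->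
  [/\ v \in P, v != x & v != y].
Proof.
case: P => // a p /and4P[/eqP<- _ /eqP<-].
case/lastP: p => [|q z]; rewrite /interior ?inE //= belast_rcons last_rcons.
rewrite rcons_uniq !mem_rcons !inE negb_or => /and3P[/andP[_ aq] zq _] /= vq.
by rewrite vq !orbT; split=> //; [apply: contraNneq aq | apply: contraNneq zq] => <-.
Qed.

Lemma dipath_cons x a b R : dipath T a b R -> T x a -> x \notin R -> dipath T x b (x :: R).
Proof.
case: R => // c p /and4P[/eqP-> Tp /eqP<- uP] Txa xR.
by apply/and4P; split; rewrite ?cons_uniq ?xR //= Txa.
Qed.

Lemma dipath_rcons y a b R :
  dipath T a b R -> T b y -> y \notin R -> dipath T a y (rcons R y).
Proof.
case: R => // c p /and4P[/eqP-> Tp /eqP<- uP] Tby yR.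
by apply/and4P; split; rewrite ?rcons_path ?Tp ?Tby ?last_rcons ?rcons_uniq ?yR.
Qed.

Definition splice (x y a b : V) (R : seq V) :=
  let R' := if a == x then R else x :: R in if b == y then R' else rcons R' y.

Lemma mem_splice x y a b R v : v \in splice x y a b R -> [|| v == x, v == y | v \in R].
Proof.
rewrite /splice; do 2 case: eqP => _; rewrite ?mem_rcons ?inE //.
all: by case: (v == x); case: (v == y); case: (v \in R).
Qed.

Lemma splice_subset x y a b R : {subset R <= splice x y a b R}.
Proof.
by move=> v vR; rewrite /splice; do 2 case: eqP => _; rewrite ?mem_rcons ?inE vR ?orbT.
Qed.

Lemma dipath_splice x y a b R : dipath T a b R -> x != y ->
  (a != x -> T x a && (x \notin R)) -> (b != y -> T b y && (y \notin R)) ->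
  dipath T x y (splice x y a b R).
Proof.
move=> Rab xy ax yb; have R'xb : dipath T x b (if a == x then R else x :: R).
  case: (eqVneq a x) Rab => [-> //|ax' Rab].
  by have /andP[Txa xR] := ax ax'; apply: dipath_cons Rab Txa xR.
rewrite /splice; case: (eqVneq b y) R'xb => [-> //|yb' R'xb].
have /andP[Tby yR] := yb yb'; apply: dipath_rcons R'xb Tby _.
by case: ifP => _; rewrite ?inE ?negb_or ?yR ?andbT // eq_sym.
Qed.

End Dipath.

Lemma extend_uniq (V : finType) (A : seq V) n : uniq A -> size A <= n <= #|V| ->
  exists t, uniq (A ++ t) /\ size (A ++ t) = n.
Proof.
move=> uA /andP[An nV]; exists (take (n - size A) (enum [predC A])); split.
  rewrite cat_uniq uA take_uniq ?enum_uniq // andbT.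
  by apply/hasPn => v /mem_take; rewrite mem_enum.
have sizeC : size (enum [predC A]) = #|V| - size A.
  by rewrite -cardE -(cardC (mem A)) (card_uniqP uA) addKn.
by rewrite size_cat size_take sizeC; case: ifP; lia.
Qed.

Section DisjointPaths.
Variables (V : finType) (T : rel V).

Lemma disjoint_paths_endpoint (D : finType) (e : D * bool -> V) (R : D -> seq V) :
    (forall d, dipath T (e (d, true)) (e (d, false)) (R d)) ->
    (forall d d', d != d' -> [disjoint R d & R d']) ->
  forall d t, e t \in R d -> d = t.1.
Proof.
move=> Rpath Rdisj d [d' b] Rd; case: (eqVneq d d') => //= ne.
have Rd' : e (d', b) \in R d' by case: b {Rd}; [apply: dipath_head | apply: dipath_last].
by rewrite (disjointFr (Rdisj _ _ ne) Rd) in Rd'.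
Qed.

Lemma linked_paths (D : finType) (e : D * bool -> V) : linked T #|D| -> injective e ->
  exists R : D -> seq V, (forall d, dipath T (e (d, true)) (e (d, false)) (R d)) /\
                         (forall d d', d != d' -> [disjoint R d & R d']).
Proof.
case=> _ link e_inj.
have [||i j|R [Rpath Rdisj]] :=
  link (fun i => e (enum_val i, true)) (fun i => e (enum_val i, false)).
- by move=> i j /e_inj[/enum_val_inj].
- by move=> i j /e_inj[/enum_val_inj].
- by apply/eqP => /e_inj.
exists (R \o enum_rank); split=> [d|d d' ne] /=; first by rewrite -{1 2}(enum_rankK d).
by apply: Rdisj; rewrite (inj_eq enum_rank_inj).
Qed.

Lemma linked_rev K : linked T K -> linked [rel u v | T v u] K.
Proof.
case=> VK link; split=> // x y x_inj y_inj xy.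
have [i j|P [Pyx Pdisj]] := link y x y_inj x_inj; first by rewrite eq_sym.
exists (fun i => rev (P i)); split=> [i|i j ne]; first exact: dipath_rev.
by rewrite (eq_disjoint (mem_rev _)) (eq_disjoint_r (mem_rev _)) Pdisj.
Qed.

Lemma linked_pairs K (L : seq V) x0 : linked T K -> uniq L -> size L = 2 * K ->
  exists R : 'I_K -> seq V,
    [/\ forall j : 'I_K, dipath T (nth x0 L j.*2) (nth x0 L j.*2.+1) (R j),
        forall j j', j != j' -> [disjoint R j & R j']
      & forall (j : 'I_K) v, v \in R j -> v \in L ->
          (v == nth x0 L j.*2) || (v == nth x0 L j.*2.+1)].
Proof.
move=> link uL sizeL.
pose pos (t : 'I_K * bool) := if t.2 then t.1.*2 else t.1.*2.+1.
have pos_lt t : pos t < size L.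
  by rewrite sizeL /pos; case: t => j [] /=; have := ltn_ord j; lia.
pose e t := nth x0 L (pos t).
have e_inj : injective e.
  move=> [j b] [j' b'] /eqP; rewrite nth_uniq // /pos /=.
  case: b b' => [] [] /eqP; try by move=> /(congr1 odd); rewrite /= !odd_double.
    by move=> /(can_inj doubleK)/val_inj->.
  by move=> /succn_inj/(can_inj doubleK)/val_inj->.
have linkI : linked T #|'I_K| by rewrite card_ord.
have [R [Rpath Rdisj]] := linked_paths linkI e_inj.
exists R; split=> // j v vR vL; pose i := index v L.
have hi : i./2 < K by rewrite ltn_half_double -mul2n -sizeL index_mem.
have vt : v = e (Ordinal hi, ~~ odd i).
  rewrite /e /pos /=; have := odd_double_half i.
  by case: odd => /= E; rewrite ?add0n ?add1n in E; rewrite E nth_index.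
move: vR; rewrite vt => /(disjoint_paths_endpoint (e := e) Rpath Rdisj) -> /=.
by case: odd; rewrite eqxx ?orbT.
Qed.

End DisjointPaths.

(* Link u with some z outside Y; every other vertex of Y is an endpoint of
   another path of the linkage, so the successor of u on its path avoids Y. *)
Lemma linked_out_neighbour (V : finType) (T : rel V) K (Y : {set V}) u :
  linked T K -> u \in Y -> #|Y| < 2 * K -> exists2 w, w \notin Y & T u w.
Proof.
move=> link uY ltYK; have VK : 2 * K <= #|V| by case: link.
have [z zY] : exists z, z \notin Y.
  have : 0 < #|~: Y| by have := cardsC Y; lia.
  by case/card_gt0P => z; rewrite inE; exists z.
have uz : u != z by apply: contraNneq zY => <-.
pose A := [:: u, z & enum (Y :\ u)].
have uA : uniq A.
  by rewrite /= !inE !mem_enum !inE eqxx negb_or uz (negbTE zY) andbF enum_uniq.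
have sizeA : size A <= 2 * K by rewrite /= -cardE; have := cardsD1 u Y; rewrite uY; lia.
have [t [uL sizeL]] := extend_uniq uA (introT andP (conj sizeA VK)).
have [R [Rpath _ Rends]] := linked_pairs u link uL sizeL.
have K0 : 0 < K by move: ltYK; rewrite (cardD1 u) uY; lia.
have := Rpath (Ordinal K0); have := Rends (Ordinal K0); rewrite /= /A /=.
case: (R _) => [|c [|w r]] //= wends.
  by case/and3P => /eqP-> /eqP uz'; rewrite uz' eqxx in uz.
case/and5P => /eqP-> /andP[Tuw _] _ uw _; exists w => //; apply/negP => wY.
have wu : w != u by apply: contraNneq uw => ->; apply: mem_head.
have := wends w; rewrite !(inE, mem_cat, mem_enum) eqxx (negbTE wu) wY !orbT /=.
by move=> /(_ isT isT) /eqP wz; rewrite -wz wY in zY.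
Qed.

Lemma linked_in_neighbour (V : finType) (T : rel V) K (Y : {set V}) u :
  linked T K -> u \in Y -> #|Y| < 2 * K -> exists2 w, w \notin Y & T w u.
Proof. by move/linked_rev; apply: linked_out_neighbour. Qed.

Lemma greedy_distinct_choice (D W : finType) (ok : D -> W -> bool) (F : {set W}) n
    (S : {set D}) (w0 : D -> W) :
    #|F| + #|S| <= n ->
    (forall d (Y : {set W}), d \in S -> F \subset Y -> #|Y| < n ->
       exists2 v, v \notin Y & ok d v) ->
  exists w : D -> W, [/\ {in ~: S, w =1 w0}, {in S &, injective w}
                       & {in S, forall d, (w d \notin F) && ok d (w d)}].
Proof.
have [m] := ubnP #|S|; elim: m S => // m IH S ltSm FSn choice.
case: (set_0Vmem S) => [->|[d dS]]; first by exists w0; split=> // ?; rewrite inE.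
have cardS : #|S| = #|S :\ d|.+1 by rewrite (cardsD1 d S) dS.
have [w [w_out w_inj w_ok]] : exists w : D -> W, [/\ {in ~: (S :\ d), w =1 w0},
    {in S :\ d &, injective w} & {in S :\ d, forall e, (w e \notin F) && ok e (w e)}].
  by apply: IH => [||e Y /setD1P[_ eS]]; [lia | lia | apply: choice].
have [|v vY okv] := choice d (F :|: w @: (S :\ d)) dS (subsetUl _ _).
  apply: leq_ltn_trans (leq_card_setU _ _) _.
  by apply: leq_ltn_trans (leq_add (leqnn _) (leq_imset_card _ _)) _; lia.
have Sd e : e \in S -> e != d -> e \in S :\ d by rewrite !inE => -> ->.
have vw e : e \in S -> e != d -> v != w e.
  by move=> eS ed; apply: contraNneq vY => ->; rewrite inE imset_f ?orbT ?Sd.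
exists (fun e => if e == d then v else w e); split.
- move=> e; rewrite inE => eS; have ed : e != d by apply: contraNneq eS => ->.
  by rewrite (negbTE ed) w_out // !inE negb_and eS orbT.
- move=> e e' eS e'S /=; case: (eqVneq e d) => [->|ed]; case: (eqVneq e' d) => [->|e'd] //.
  + by move/eqP; rewrite (negbTE (vw _ e'S e'd)).
  + by move/eqP; rewrite eq_sym (negbTE (vw _ eS ed)).
  + by apply: w_inj; apply: Sd.
- move=> e eS /=; case: eqP => [->|/eqP ed]; last exact/w_ok/Sd.
  by rewrite okv andbT; apply: contra vY; rewrite inE => ->.
Qed.

Lemma disjoint_family_small_member (V D : finType) (A : D -> {set V}) (d0 : D) :
  (forall d d', d != d' -> [disjoint A d & A d']) -> exists d, #|D| * #|A d| <= #|V|.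
Proof.
move=> Adisj; have [d _ dmin] := @arg_minnP D d0 xpredT (fun d => #|A d|) isT.
exists d; rewrite -sum_nat_const.
have sumA : \sum_e #|A e| = #|\bigcup_e A e|.
  rewrite -sum1_card (partition_disjoint_bigcup _ _ Adisj).
  by apply: eq_bigr => e _; rewrite sum1_card.
apply: leq_trans (max_card (\bigcup_e A e)); rewrite -sumA.
by apply: leq_sum => e _; apply: dmin.
Qed.

Definition fiber_rep (I : finType) (V : eqType) (f : I -> V) i : I :=
  odflt i [pick j | f j == f i].

Lemma fiber_repE (I : finType) (V : eqType) (f : I -> V) i : f (fiber_rep f i) = f i.
Proof. by rewrite /fiber_rep; case: pickP => [j /eqP|]. Qed.

Lemma fiber_rep_eq (I : finType) (V : eqType) (f : I -> V) i j :
  f i = f j -> fiber_rep f i = fiber_rep f j.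
Proof. by rewrite /fiber_rep => ->; case: pickP => [//|/(_ j)]; rewrite eqxx. Qed.

Section Rerouting.
Variables (V : finType) (T : rel V) (I D : finType) (p : D -> I) (x y : I -> V).

Definition terminal v := [exists i, (v == x i) || (v == y i)].

Definition slot_end (t : D * bool) := if t.2 then x (p t.1) else y (p t.1).

Definition slot_arc (t : D * bool) v := if t.2 then T (slot_end t) v else T v (slot_end t).

Definition good_endpoint t v := (v == slot_end t) || ~~ terminal v && slot_arc t v.

Lemma terminal_x i : terminal (x i).
Proof. by apply/existsP; exists i; rewrite eqxx. Qed.

Lemma terminal_y i : terminal (y i).
Proof. by apply/existsP; exists i; rewrite eqxx orbT. Qed.

Lemma terminal_slot_end t : terminal (slot_end t).
Proof. by rewrite /slot_end; case: t.2; [apply: terminal_x | apply: terminal_y]. Qed.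

Section Endpoints.
Variable s0 : I -> D.
Hypothesis p_s0 : cancel s0 p.

(* The slot ends where terminals are used themselves: each terminal vertex is
   pinned to exactly one of them, in a slot of the form s0 i. *)
Definition primary : {set D * bool} := [set t |
  (t.1 == s0 (p t.1)) && if t.2 then fiber_rep x (p t.1) == p t.1
  else (fiber_rep y (p t.1) == p t.1) && ~~ [exists i, x i == y (p t.1)]].

Lemma primary_inj : {in primary &, injective slot_end}.
Proof.
move=> [d b] [d' b']; rewrite !inE /slot_end /=.
move=> /andP[/eqP dE bd] /andP[/eqP dE' bd'].
case: b b' bd bd' => [] [] /=.
- by move=> /eqP rd /eqP rd' /fiber_rep_eq; rewrite rd rd' => pE; rewrite dE dE' pE.
- by move=> _ /andP[_ /existsPn/(_ (p d))/negP nE] /eqP/nE.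
- by move=> /andP[_ /existsPn/(_ (p d'))/negP nE] _ /esym/eqP/nE.
- move=> /andP[/eqP rd _] /andP[/eqP rd' _] /fiber_rep_eq; rewrite rd rd' => pE.
  by rewrite dE dE' pE.
Qed.

Lemma terminal_primary v : terminal v -> exists2 t, t \in primary & v = slot_end t.
Proof.
move=> /existsP[i vi]; case: (boolP [exists j, x j == v]) => [/existsP[j /eqP xj] | nx].
  exists (s0 (fiber_rep x j), true); last by rewrite /slot_end /= p_s0 fiber_repE.
  by rewrite inE /= p_s0 eqxx (fiber_rep_eq (fiber_repE x j)) eqxx.
have vy : v = y i.
  by case/orP: vi => /eqP // vx; move/existsPn: nx => /(_ i); rewrite vx eqxx.
exists (s0 (fiber_rep y i), false); last by rewrite /slot_end /= p_s0 fiber_repE.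
by rewrite inE /= p_s0 eqxx (fiber_rep_eq (fiber_repE y i)) eqxx fiber_repE -vy nx.
Qed.

Lemma linked_endpoints : linked T #|D| ->
  exists e : D * bool -> V, [/\ injective e, forall t, good_endpoint t (e t)
                               & forall v, terminal v -> exists t, v = e t].
Proof.
move=> link.
have cardF : #|[set v | terminal v]| + #|~: primary| <= #|{: D * bool}|.
  rewrite -(cardsC primary) leq_add2r; apply: leq_trans (leq_imset_card slot_end primary).
  apply/subset_leq_card/subsetP => v; rewrite inE => /terminal_primary[t tP ->].
  exact: imset_f.
have [t Y _ /subsetP FY|w [w_P w_inj w_ok]] :=
  greedy_distinct_choice (ok := slot_arc) slot_end cardF.
  rewrite card_prod card_bool mulnC => ltY.
  have tY : slot_end t \in Y by apply: FY; rewrite inE terminal_slot_end.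
  rewrite /slot_arc; case: t.2.
    exact: linked_out_neighbour tY ltY.
  exact: linked_in_neighbour tY ltY.
have {}w_P t : t \in primary -> w t = slot_end t by move=> tP; apply: w_P; rewrite setCK.
have w_nP t : t \notin primary -> ~~ terminal (w t) && slot_arc t (w t).
  by move=> tP; have := w_ok t; rewrite in_setC tP inE => /(_ isT).
exists w; split.
- move=> t t'; case: (boolP (t \in primary)) => tP; case: (boolP (t' \in primary)) => t'P.
  + by rewrite !w_P // => /primary_inj; apply.
  + by rewrite w_P // => E; move: (w_nP t' t'P); rewrite -E terminal_slot_end.
  + by rewrite (w_P t') // => E; move: (w_nP t tP); rewrite E terminal_slot_end.
  + by apply: w_inj; rewrite inE.
- move=> t; rewrite /good_endpoint; case: (boolP (t \in primary)) => tP.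
    by rewrite w_P ?eqxx.
  by rewrite w_nP ?orbT.
- by move=> v /terminal_primary[t tP ->]; exists t; rewrite w_P.
Qed.

End Endpoints.

Section Splice.
Variables (e : D * bool -> V) (R : D -> seq V).
Hypotheses (xy : forall i, x i != y i) (e_inj : injective e)
  (e_good : forall t, good_endpoint t (e t))
  (e_cover : forall v, terminal v -> exists t, v = e t)
  (R_path : forall d, dipath T (e (d, true)) (e (d, false)) (R d))
  (R_disj : forall d d', d != d' -> [disjoint R d & R d']).

Definition rerouted d := splice (x (p d)) (y (p d)) (e (d, true)) (e (d, false)) (R d).

Lemma slot_end_inj d b b' : slot_end (d, b) = slot_end (d, b') -> b = b'.
Proof. by case: b b' => [] [] //= /eqP; rewrite ?(negbTE (xy _)) // eq_sym (negbTE (xy _)). Qed.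

Lemma terminal_endpoint t : terminal (e t) -> e t = slot_end t.
Proof. by case/orP: (e_good t) => [/eqP //|/andP[/negP]]. Qed.

Lemma terminal_mem_path d v : v \in R d -> terminal v ->
  exists b, v = e (d, b) /\ v = slot_end (d, b).
Proof.
move=> vR /[dup] /e_cover[[d' b] vE]; rewrite vE => /terminal_endpoint E.
move: vR; rewrite vE => /(disjoint_paths_endpoint R_path R_disj) /= dd'.
by exists b; rewrite dd' -E.
Qed.

Lemma slot_end_notin_path t : e t != slot_end t -> slot_end t \notin R t.1.
Proof.
move: t => [d b] ne; apply/negP.
move=> /terminal_mem_path /(_ (terminal_slot_end _)) [b' [E E']].
by move: E; rewrite -(slot_end_inj E') => E; rewrite -E eqxx in ne.
Qed.

Lemma rerouted_path d : dipath T (x (p d)) (y (p d)) (rerouted d).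
Proof.
rewrite /rerouted; apply: (dipath_splice (R_path d)) => [|ne|ne]; first exact: xy.
  case/orP: (e_good (d, true)) => [/eqP E|/andP[_ arc]]; first by rewrite E eqxx in ne.
  by apply/andP; split; [exact: arc | exact: (slot_end_notin_path (t := (d, true)) ne)].
case/orP: (e_good (d, false)) => [/eqP E|/andP[_ arc]]; first by rewrite E eqxx in ne.
by apply/andP; split; [exact: arc | exact: (slot_end_notin_path (t := (d, false)) ne)].
Qed.

Lemma rerouted_terminal d v :
  v \in rerouted d -> terminal v -> (v == x (p d)) || (v == y (p d)).
Proof.
move=> /mem_splice /or3P[-> // | -> | vR /(terminal_mem_path vR) [[] [_ ->]]].
all: by rewrite ?eqxx ?orbT.
Qed.

Lemma rerouted_terminals d :
  [set v in rerouted d | terminal v] = [set x (p d); y (p d)].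
Proof.
apply/setP => v; rewrite !inE; apply/andP/orP => [[vQ /(rerouted_terminal vQ)/orP] //|].
case=> /eqP->; split; rewrite ?terminal_x ?terminal_y //.
  exact: dipath_head (rerouted_path d).
exact: dipath_last (rerouted_path d).
Qed.

Lemma mem_interior_rerouted d v :
  v \in interior (rerouted d) -> v \in R d /\ ~~ terminal v.
Proof.
move=> /(mem_interior (rerouted_path d)) [vQ vx vy].
split; last by apply/negP => /(rerouted_terminal vQ); rewrite (negbTE vx) (negbTE vy).
by move: (mem_splice vQ); rewrite (negbTE vx) (negbTE vy).
Qed.

Lemma rerouted_disjoint d d' : d != d' -> [disjoint interior (rerouted d) & rerouted d'].
Proof.
move=> ne; rewrite disjoint_sym disjoint_has; apply/hasPn => v vQ'.
apply/negP => /mem_interior_rerouted [vR nt].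
move: (mem_splice vQ'); rewrite (disjointFr (R_disj ne) vR) orbF.
by case/orP => /eqP vE; move: nt; rewrite vE ?terminal_x ?terminal_y.
Qed.

Lemma rerouted_head_endpoint d d' :
  d != d' -> rerouted d = rerouted d' -> e (d, true) = x (p d).
Proof.
move=> ne Q_eq; apply: terminal_endpoint; have Rd := dipath_head (R_path d).
have /mem_splice : e (d, true) \in rerouted d' by rewrite -Q_eq splice_subset.
rewrite (disjointFr (R_disj ne) Rd) orbF.
by case/orP => /eqP->; rewrite ?terminal_x ?terminal_y.
Qed.

Lemma rerouted_inj : injective rerouted.
Proof.
move=> d d' Q_eq; case: (eqVneq d d') => // ne.
have xE : x (p d) = x (p d').
  by apply: dipath_start_unique (rerouted_path d) _; rewrite Q_eq; apply: rerouted_path.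
have := rerouted_head_endpoint ne Q_eq; rewrite xE.
rewrite -(rerouted_head_endpoint _ (esym Q_eq)) 1?eq_sym // => /e_inj[].
by move/eqP: ne.
Qed.

Lemma rerouted_interiors_disjoint d d' : d != d' ->
  [disjoint interior (rerouted d) & interior (rerouted d')].
Proof.
move=> ne; apply: disjointWr (rerouted_disjoint ne).
by apply/subsetP => v /(mem_interior (rerouted_path d')) [].
Qed.

Lemma rerouted_family : [/\ injective rerouted,
  forall d, dipath T (x (p d)) (y (p d)) (rerouted d),
  forall d d', d != d' -> [disjoint interior (rerouted d) & rerouted d'],
  forall d, [set v in rerouted d | terminal v] = [set x (p d); y (p d)]
  & forall d d', d != d' -> [disjoint interior (rerouted d) & interior (rerouted d')]].
Proof.
split; [exact: rerouted_inj | exact: rerouted_path | exact: rerouted_disjoint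
       | exact: rerouted_terminals | exact: rerouted_interiors_disjoint].
Qed.

End Splice.
End Rerouting.

Theorem proposition2p2 (V : finType) (T : rel V) (k s : nat) :
  0 < s -> tournament T -> linked T (k * s) ->
  forall x y : 'I_k -> V, (forall i, x i != y i) ->
  exists P : 'I_k -> seq V,
    [/\ injective P,
        (forall i, dipath T (x i) (y i) (P i)),
        (forall i j, i != j -> [disjoint interior (P i) & P j]),
        (forall i, [set v in P i | [exists j, (v == x j) || (v == y j)]]
                   = [set x i; y i])
      & s * #|\bigcup_(i < k) interior (P i)| <= #|V|].
Proof.
move=> s_gt0 _ link x y xy; pose c0 : 'I_s := Ordinal s_gt0.
have linkD : linked T #|{: 'I_s * 'I_k}| by rewrite card_prod !card_ord mulnC.
have [e [e_inj e_good e_cover]] :=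
  linked_endpoints x y (p := snd) (s0 := pair c0) (fun _ => erefl) linkD.
have [R [R_path R_disj]] := linked_paths linkD e_inj.
pose Q := rerouted snd x y e R.
have [Q_inj Q_path Q_disj Q_terminals Q_int] :=
  rerouted_family xy e_inj e_good e_cover R_path R_disj.
have [c small] : exists c, #|'I_s| * #|\bigcup_(i < k) interior (Q (c, i))| <= #|V|.
  apply: disjoint_family_small_member c0 _ => c c' ne.
  apply/bigcup_disjoint => i _; rewrite disjoint_sym; apply/bigcup_disjoint => j _.
  by apply: Q_int; apply: contra ne => /eqP[->].
exists (fun i => Q (c, i)); split=> [i j /Q_inj[] //|i|i j ne|i|].
- exact: Q_path.
- by apply: Q_disj; apply: contra ne => /eqP[->].
- exact: Q_terminals.
- by rewrite card_ord in small.
Qed.
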